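(* Let $\lambda$ and $g$ be as in the context, let $q(-1)=-1$ and let $q(0)$ be the fixed point of $g$ with negative multiplier. Then $g'(q(-1))=\left[g'(q(0))\right]^{2}$.
   Context: There is a unique constant $\lambda=2.5029\ldots$ and a unique infinitely (period-doubling) renormalizable analytic unimodal map $g:[-1,1]\to[-1,1]$ solving $g(x)=-\lambda\, g^{2}(-x/\lambda)$ for $-1\le x\le1$ ($g^2=g\circ g$). Unimodal means: $-1$ is the unique fixed point with positive multiplier, $g(1)=-1$, and $g$ has a unique maximum at an interior nondegenerate critical point $c^{(0)}$. Moreover $g$ is analytic near $[-1,1]$, even, concave on $[-c^{(1)},c^{(1)}]$ where $c^{(1)}=g(c^{(0)})$, satisfies $g(c^{(1)})=-c^{(1)}/\lambda$, $g'(c^{(1)})=-\lambda$, and has negative Schwarzian derivative. *)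

From Stdlib Require Import Reals.
From Coquelicot Require Import Coquelicot.
Open Scope R_scope.

Definition analytic_near_interval (g : R -> R) : Prop :=
  exists eps : R, 0 < eps /\
    forall x : R, -1 - eps < x < 1 + eps ->
      exists r : R, 0 < r /\
        exists a : nat -> R,
          forall y : R, Rabs (y - x) < r -> is_pseries a (y - x) (g y).

Definition schwarzian (g : R -> R) (x : R) : R :=
  Derive_n g 3 x / Derive g x
  - 3 / 2 * (Derive_n g 2 x / Derive g x) ^ 2.

Definition feigenbaum_pair (lam : R) (g : R -> R) : Prop :=
  2.5029 <= lam < 2.5030 /\
  (forall x, -1 <= x <= 1 -> -1 <= g x <= 1) /\
  analytic_near_interval g /\
  (forall x, -1 <= x <= 1 -> g x = - lam * g (g (- x / lam))) /\
  (g (-1) = -1 /\ 0 < Derive g (-1)) /\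
  (forall x, -1 <= x <= 1 -> g x = x -> 0 < Derive g x -> x = -1) /\
  g 1 = -1 /\
  (exists c0 : R,
     -1 < c0 < 1 /\
     (forall x, -1 <= x <= 1 -> x <> c0 -> g x < g c0) /\
     Derive g c0 = 0 /\ Derive_n g 2 c0 <> 0 /\
     (let c1 := g c0 in
      (forall x y t, - c1 <= x <= c1 -> - c1 <= y <= c1 -> 0 <= t <= 1 ->
         t * g x + (1 - t) * g y <= g (t * x + (1 - t) * y)) /\
      g c1 = - c1 / lam /\
      Derive g c1 = - lam) /\
     (forall x, -1 <= x <= 1 -> x <> c0 -> schwarzian g x < 0)) /\
  (forall x, -1 <= x <= 1 -> g (- x) = g x).

From Stdlib Require Import Reals Lra.
From Coquelicot Require Import Coquelicot.
Open Scope R_scope.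

(* Differentiating the renormalization equation at the fixed point -1 gives
   g'(-1) = g'(g(1/lam)) g'(1/lam), and the same equation at -1 shows that
   g(g(1/lam)) = 1/lam, so it suffices to prove q0 = 1/lam.  If q0 < 1/lam,
   then -lam q0 is a second fixed point, with positive multiplier g'(q0)^2.
   If q0 > 1/lam, then {1/lam, g(1/lam)} is a 2-cycle around q0; by the mean
   value theorem (g o g)' equals 1 somewhere between 1/lam and q0, while at
   both points of the cycle it equals g'(-1) >= 1.  Hence (g o g)' has a
   positive interior minimum, which its negative Schwarzian derivative
   forbids. *)

Lemma ex_pseries_CV_radius_ge (a : nat -> R) (z : R) :
  ex_pseries a z -> Rbar_le (Rabs z) (CV_radius a).
Proof.
  intros Hz. apply Rbar_not_lt_le. intros Hlt.
  apply (CV_disk_outside a z Hlt), ex_series_lim_0, ex_pseries_R, Hz.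
Qed.

Lemma ex_derive_n_of_local_pseries (f : R -> R) (x r : R) (a : nat -> R) :
  0 < r -> (forall y, Rabs (y - x) < r -> is_pseries a (y - x) (f y)) ->
  forall n, ex_derive_n f n x.
Proof.
  intros Hr Hf n.
  assert (Hrad : Rbar_lt (Rabs (x + - x)) (CV_radius a)).
  { apply (Rbar_lt_le_trans _ (Rabs ((x + r / 2) - x))).
    - replace (x + - x) with 0 by ring. replace (x + r / 2 - x) with (r / 2) by ring.
      rewrite Rabs_R0, Rabs_pos_eq; simpl; lra.
    - apply ex_pseries_CV_radius_ge. eexists. apply Hf.
      replace (x + r / 2 - x) with (r / 2) by ring. rewrite Rabs_pos_eq; lra. }
  apply (ex_derive_n_ext_loc (fun y => PSeries a (y + - x))).
  - exists (mkposreal r Hr). intros y Hy. apply is_pseries_unique, Hf, Hy.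
  - apply ex_derive_n_comp_trans, ex_derive_n_PSeries, Hrad.
Qed.

Lemma analytic_near_interval_ex_derive_n (g : R -> R) :
  analytic_near_interval g -> forall n x, -1 <= x <= 1 -> ex_derive_n g n x.
Proof.
  intros [eps [Heps Hg]] n x Hx.
  destruct (Hg x ltac:(lra)) as [r [Hr [a Ha]]].
  exact (ex_derive_n_of_local_pseries g x r a Hr Ha n).
Qed.

Lemma is_derive_comp_mult (u h v : R -> R) (x du dh dv : R) :
  is_derive u (h x) du -> is_derive h x dh -> is_derive v x dv ->
  is_derive (fun t => u (h t) * v t) x (du * dh * v x + u (h x) * dv).
Proof.
  intros Hu Hh Hv.
  replace (du * dh * v x) with (scal dh du * v x) by (unfold scal; simpl; unfold mult; simpl; ring).
  exact (is_derive_mult (fun t => u (h t)) v x _ _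
           (is_derive_comp u h x du dh Hu Hh) Hv Rmult_comm).
Qed.

Lemma derivable_pt_lim_pos_strict_incr (f : R -> R) (x l e : R) :
  derivable_pt_lim f x l -> 0 < l -> 0 < e ->
  exists d, 0 < d <= e /\ forall h, 0 < h < d -> f (x - h) < f x < f (x + h).
Proof.
  intros Hf Hl He. destruct (Hf (l / 2)) as [d Hd]; [lra|].
  pose proof (cond_pos d) as Hd0. pose proof (Rmin_l d e). pose proof (Rmin_r d e).
  exists (Rmin d e). split; [split; [apply Rmin_pos|]; lra|].
  intros h Hh.
  assert (Hright := Hd h ltac:(lra) ltac:(rewrite Rabs_pos_eq; lra)).
  assert (Hleft := Hd (- h) ltac:(lra) ltac:(rewrite Rabs_Ropp, Rabs_pos_eq; lra)).
  apply Rabs_def2 in Hright, Hleft.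
  assert (f (x + h) - f x = (f (x + h) - f x) / h * h) by (field; lra).
  assert (f (x + - h) - f x = (f (x + - h) - f x) / (- h) * (- h)) by (field; lra).
  replace (x - h) with (x + - h) by ring. split; nra.
Qed.

Lemma derivable_pt_lim_neg_strict_decr (f : R -> R) (x l e : R) :
  derivable_pt_lim f x l -> l < 0 -> 0 < e ->
  exists d, 0 < d <= e /\ forall h, 0 < h < d -> f (x + h) < f x < f (x - h).
Proof.
  intros Hf Hl He.
  destruct (derivable_pt_lim_pos_strict_incr (- f)%F x (- l) e) as [d [Hd Hmono]];
    [apply derivable_pt_lim_opp, Hf | lra | exact He |].
  exists d. split; [exact Hd|]. intros h Hh.
  specialize (Hmono h Hh). unfold opp_fct in Hmono. lra.
Qed.

Lemma derivable_pt_lim_unique_right (f k : R -> R) (x d l1 l2 : R) :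
  derivable_pt_lim f x l1 -> derivable_pt_lim k x l2 -> 0 < d ->
  (forall y, x <= y < x + d -> f y = k y) -> l1 = l2.
Proof.
  intros Hf Hk Hd Heq.
  assert (Hdiff := derivable_pt_lim_minus f k x l1 l2 Hf Hk).
  destruct (Rtotal_order (l1 - l2) 0) as [Hlt|[H0|Hgt]]; [exfalso | lra | exfalso].
  - destruct (derivable_pt_lim_neg_strict_decr _ x _ d Hdiff Hlt Hd) as [e [He Hmono]].
    specialize (Hmono (e / 2) ltac:(lra)). unfold minus_fct in Hmono.
    rewrite (Heq x), (Heq (x + e / 2)) in Hmono by lra. lra.
  - destruct (derivable_pt_lim_pos_strict_incr _ x _ d Hdiff Hgt Hd) as [e [He Hmono]].
    specialize (Hmono (e / 2) ltac:(lra)). unfold minus_fct in Hmono.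
    rewrite (Heq x), (Heq (x + e / 2)) in Hmono by lra. lra.
Qed.

Lemma interior_min_derive (F F' F'' : R -> R) (a b m : R) :
  (forall x, a <= x <= b -> derivable_pt_lim F x (F' x)) ->
  derivable_pt_lim F' m (F'' m) ->
  a < m < b -> (forall x, a <= x <= b -> F m <= F x) ->
  F' m = 0 /\ 0 <= F'' m.
Proof.
  intros DF DF' Hm Hmin.
  assert (HF' : F' m = 0).
  { destruct (Rtotal_order (F' m) 0) as [Hlt|[H0|Hgt]]; [exfalso | exact H0 | exfalso].
    - destruct (derivable_pt_lim_neg_strict_decr F m _ (b - m) (DF m ltac:(lra)) Hlt
        ltac:(lra)) as [d [Hd Hmono]].
      specialize (Hmono (d / 2) ltac:(lra)). specialize (Hmin (m + d / 2) ltac:(lra)). lra.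
    - destruct (derivable_pt_lim_pos_strict_incr F m _ (m - a) (DF m ltac:(lra)) Hgt
        ltac:(lra)) as [d [Hd Hmono]].
      specialize (Hmono (d / 2) ltac:(lra)). specialize (Hmin (m - d / 2) ltac:(lra)). lra. }
  split; [exact HF'|].
  destruct (Rlt_or_le (F'' m) 0) as [Hlt|Hge]; [exfalso | exact Hge].
  destruct (derivable_pt_lim_neg_strict_decr F' m _ (b - m) DF' Hlt ltac:(lra))
    as [d [Hd Hmono]].
  destruct (MVT_cor2 F F' m (m + d / 2)) as [c [Hc Hcm]];
    [lra | intros c Hc; apply DF; lra |].
  specialize (Hmono (c - m) ltac:(lra)). replace (m + (c - m)) with c in Hmono by ring.
  specialize (Hmin (m + d / 2) ltac:(lra)). nra.
Qed.

Lemma continuity_ab_min_interior (f : R -> R) (a b u : R) :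
  (forall x, a <= x <= b -> continuity_pt f x) -> a < u < b -> f u <= f a -> f u <= f b ->
  exists m, a < m < b /\ forall x, a <= x <= b -> f m <= f x.
Proof.
  intros Hc Hu Hua Hub.
  destruct (continuity_ab_min f a b) as [m [Hmin Hm]]; [lra | exact Hc |].
  destruct (Req_dec m a) as [->|Hma]; [|destruct (Req_dec m b) as [->|Hmb]].
  - exists u. split; [exact Hu|]. intros x Hx. specialize (Hmin x Hx). lra.
  - exists u. split; [exact Hu|]. intros x Hx. specialize (Hmin x Hx). lra.
  - exists m. split; [lra | exact Hmin].
Qed.

Lemma continuity_nonzero_pos (f : R -> R) (a b x y : R) :
  (forall t, a <= t <= b -> continuity_pt f t) -> (forall t, a <= t <= b -> f t <> 0) ->
  a <= x <= b -> a <= y <= b -> 0 < f x -> 0 < f y.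
Proof.
  intros Hc Hnz Hx Hy Hfx.
  destruct (Rlt_or_le 0 (f y)) as [Hfy|[Hfy|Hfy]];
    [exact Hfy | exfalso | exfalso; now apply (Hnz y)].
  destruct (Rtotal_order x y) as [Hxy|[<-|Hxy]]; [|lra|].
  - destruct (Ranalysis5.IVT_interv (fun t => - f t) x y) as [z [Hz Hfz]];
      [intros t Ht; apply continuity_pt_opp, Hc; lra | exact Hxy | lra | lra |].
    apply (Hnz z); lra.
  - destruct (Ranalysis5.IVT_interv f y x) as [z [Hz Hfz]];
      [intros t Ht; apply Hc; lra | exact Hxy | lra | lra |].
    apply (Hnz z); lra.
Qed.

Definition schwarzian_jet (d1 d2 d3 : R) : R := d3 / d1 - 3 / 2 * (d2 / d1) ^ 2.

(* The chain rule S(f o h) = (S f o h) h'^2 + S h, with p the jet of f at h x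
   and q the jet of h at x. *)
Lemma schwarzian_jet_comp (p1 p2 p3 q1 q2 q3 : R) : p1 <> 0 -> q1 <> 0 ->
  schwarzian_jet (p1 * q1) (p2 * q1 ^ 2 + p1 * q2)
    (p3 * q1 ^ 3 + 3 * p2 * q1 * q2 + p1 * q3)
  = schwarzian_jet p1 p2 p3 * q1 ^ 2 + schwarzian_jet q1 q2 q3.
Proof. intros. unfold schwarzian_jet. field. split; assumption. Qed.

Lemma schwarzian_jet_nonneg_at_min (F F' F'' : R -> R) (a b m : R) :
  (forall x, a <= x <= b -> derivable_pt_lim F x (F' x)) ->
  derivable_pt_lim F' m (F'' m) ->
  a < m < b -> (forall x, a <= x <= b -> F m <= F x) -> 0 < F m ->
  0 <= schwarzian_jet (F m) (F' m) (F'' m).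
Proof.
  intros DF DF' Hm Hmin Hpos.
  destruct (interior_min_derive F F' F'' a b m DF DF' Hm Hmin) as [-> H2].
  unfold schwarzian_jet. unfold Rdiv. rewrite Rmult_0_l.
  assert (0 <= F'' m * / F m) by (apply Rmult_le_pos; [|apply Rlt_le, Rinv_0_lt_compat]; lra).
  lra.
Qed.

Section FeigenbaumPair.

Variables (lam : R) (g : R -> R).
Hypothesis Hfp : feigenbaum_pair lam g.

Lemma lam_gt_1 : 1 < lam.
Proof. destruct Hfp as [Hlam _]. lra. Qed.

Lemma g_range x : -1 <= x <= 1 -> -1 <= g x <= 1.
Proof. destruct Hfp as (_ & Hrange & _). apply Hrange. Qed.

Lemma g_renorm x : -1 <= x <= 1 -> g x = - lam * g (g (- x / lam)).
Proof. destruct Hfp as (_ & _ & _ & Heq & _). apply Heq. Qed.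

Lemma g_m1 : g (-1) = -1.
Proof. destruct Hfp as (_ & _ & _ & _ & [H _] & _). exact H. Qed.

Lemma Derive_g_m1_pos : 0 < Derive g (-1).
Proof. destruct Hfp as (_ & _ & _ & _ & [_ H] & _). exact H. Qed.

Lemma pos_mult_fixed_point_eq_m1 x : -1 <= x <= 1 -> g x = x -> 0 < Derive g x -> x = -1.
Proof. destruct Hfp as (_ & _ & _ & _ & _ & H & _). apply H. Qed.

Lemma g_1 : g 1 = -1.
Proof. destruct Hfp as (_ & _ & _ & _ & _ & _ & H & _). exact H. Qed.

Lemma critical_point_at_0 :
  (forall x, -1 <= x <= 1 -> x <> 0 -> g x < g 0) /\ Derive g 0 = 0 /\
  g (g 0) = - g 0 / lam /\ Derive g (g 0) = - lam /\
  (forall x, -1 <= x <= 1 -> x <> 0 -> schwarzian g x < 0).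
Proof.
  destruct Hfp as (_ & _ & _ & _ & _ & _ & _ & Hc & Heven).
  destruct Hc as (c0 & Hc0 & Hmax & Hdc0 & _ & (_ & Hgc1 & Hdc1) & Hschw).
  assert (c0 = 0) as ->; [|repeat split; assumption].
  destruct (Req_dec c0 0) as [H0|H0]; [exact H0|exfalso].
  specialize (Hmax (- c0) ltac:(lra) ltac:(lra)). rewrite Heven in Hmax by lra. lra.
Qed.

Lemma g_is_derive n x : -1 <= x <= 1 -> is_derive (Derive_n g n) x (Derive_n g (S n) x).
Proof.
  intros Hx. apply Derive_correct.
  destruct Hfp as (_ & _ & Han & _).
  exact (analytic_near_interval_ex_derive_n g Han (S n) x Hx).
Qed.

Lemma g_derivable_pt_lim n x :
  -1 <= x <= 1 -> derivable_pt_lim (Derive_n g n) x (Derive_n g (S n) x).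
Proof. intros Hx. apply is_derive_Reals, g_is_derive, Hx. Qed.

Lemma Derive_g_continuous x : -1 <= x <= 1 -> continuity_pt (Derive g) x.
Proof.
  intros Hx. apply derivable_continuous_pt.
  exists (Derive_n g 2 x). exact (g_derivable_pt_lim 1 x Hx).
Qed.

(* In Rocq [/ 0 = 0], so at a critical point the Schwarzian evaluates to 0:
   negative Schwarzian away from 0 rules out other critical points. *)
Lemma Derive_g_neq0 x : -1 <= x <= 1 -> x <> 0 -> Derive g x <> 0.
Proof.
  intros Hx Hx0 Hd. destruct critical_point_at_0 as (_ & _ & _ & _ & Hschw).
  specialize (Hschw x Hx Hx0). unfold schwarzian in Hschw.
  rewrite Hd in Hschw. unfold Rdiv in Hschw. rewrite Rinv_0 in Hschw. lra.
Qed.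

Lemma Derive_g_pos_left x : -1 <= x < 0 -> 0 < Derive g x.
Proof.
  intros Hx.
  apply (continuity_nonzero_pos (Derive g) (-1) x (-1) x);
    [intros t Ht; apply Derive_g_continuous; lra
    | intros t Ht; apply Derive_g_neq0; lra | lra | lra | exact Derive_g_m1_pos].
Qed.

Lemma Derive_g_neg_right x : 0 < x <= 1 -> Derive g x < 0.
Proof.
  intros Hx.
  destruct (MVT_cor2 g (Derive g) 0 1) as [xi [Hmvt Hxi]];
    [lra | intros c Hc; exact (g_derivable_pt_lim 0 c ltac:(lra)) |].
  assert (Hxi_neg : Derive g xi < 0).
  { assert (Hg0 := g_range 0 ltac:(lra)). rewrite g_1 in Hmvt.
    destruct (Rle_lt_or_eq_dec (Derive g xi) 0) as [H|H]; [nra | exact H |].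
    exfalso. apply (Derive_g_neq0 xi); lra. }
  pose proof (Rmin_l x xi). pose proof (Rmin_r x xi).
  assert (Hmin : 0 < Rmin x xi) by (apply Rmin_pos; lra).
  enough (0 < - Derive g x) by lra.
  apply (continuity_nonzero_pos (fun t => - Derive g t) (Rmin x xi) 1 xi x);
    [intros t Ht; apply continuity_pt_opp, Derive_g_continuous; lra
    | intros t Ht; specialize (Derive_g_neq0 t ltac:(lra) ltac:(lra)); lra
    | lra | lra | lra].
Qed.

Lemma g_strict_decr x y : 0 <= x -> x < y -> y <= 1 -> g y < g x.
Proof.
  intros Hx Hxy Hy.
  destruct (MVT_cor2 g (Derive g) x y) as [xi [Hmvt Hxi]];
    [lra | intros c Hc; exact (g_derivable_pt_lim 0 c ltac:(lra)) |].
  assert (Derive g xi < 0) by (apply Derive_g_neg_right; lra). nra.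
Qed.

Lemma g_decr x y : 0 <= x -> x <= y -> y <= 1 -> g y <= g x.
Proof.
  intros Hx Hxy Hy. destruct (Req_dec x y) as [->|Hne]; [lra|].
  apply Rlt_le, g_strict_decr; lra.
Qed.

Lemma g_0_pos : 0 < g 0.
Proof.
  destruct critical_point_at_0 as (Hmax & Hd0 & Hgc1 & Hdc1 & _).
  pose proof lam_gt_1 as Hlam. assert (Hc1 := g_range 0 ltac:(lra)).
  destruct (Req_dec (g 0) 0) as [H0|H0]; [rewrite H0, Hd0 in Hdc1; lra|].
  specialize (Hmax (g 0) Hc1 H0). rewrite Hgc1 in Hmax.
  apply (Rmult_lt_compat_r lam) in Hmax; [|lra].
  replace (- g 0 / lam * lam) with (- g 0) in Hmax by (field; lra). nra.
Qed.

(* If g'(-1) < 1, then g t < t just to the right of -1 while g 0 > 0, so g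
   would have a fixed point in (-1, 0), where g' > 0. *)
Lemma Derive_g_m1_ge_1 : 1 <= Derive g (-1).
Proof.
  destruct (Rlt_or_le (Derive g (-1)) 1) as [Hlt|Hge]; [exfalso | exact Hge].
  assert (Hdiff := derivable_pt_lim_minus g id (-1) (Derive g (-1)) 1
                     (g_derivable_pt_lim 0 (-1) ltac:(lra)) (derivable_pt_lim_id (-1))).
  destruct (derivable_pt_lim_neg_strict_decr _ (-1) _ 1 Hdiff ltac:(lra) ltac:(lra))
    as [d [Hd Hmono]].
  specialize (Hmono (d / 2) ltac:(lra)). unfold minus_fct, id in Hmono. rewrite g_m1 in Hmono.
  pose proof g_0_pos.
  destruct (Ranalysis5.IVT_interv (fun t => g t - t) (-1 + d / 2) 0) as [z [Hz Hfix]];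
    [| lra | lra | lra |].
  { intros t Ht. apply continuity_pt_minus; [|apply continuity_pt_id].
    apply derivable_continuous_pt. exists (Derive g t).
    exact (g_derivable_pt_lim 0 t ltac:(lra)). }
  assert (z <> 0) by (intros ->; lra).
  assert (z = -1) by (apply pos_mult_fixed_point_eq_m1; [lra | lra | apply Derive_g_pos_left; lra]).
  lra.
Qed.

Lemma Derive_g_renorm y :
  -1 <= y < 1 -> Derive g y = Derive g (g (- y / lam)) * Derive g (- y / lam).
Proof.
  intros Hy. pose proof lam_gt_1 as Hlam.
  assert (Hz : -1 <= - y / lam <= 1).
  { split; [apply (Rmult_le_reg_r lam) | apply (Rmult_le_reg_r lam)];
      try lra; unfold Rdiv; rewrite Rmult_assoc, Rinv_l; lra. }
  assert (Hk : is_derive (fun t => - lam * g (g (- t / lam))) y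
                 (Derive g (g (- y / lam)) * Derive g (- y / lam))).
  { assert (Hlin : is_derive (fun t => - t / lam) y (- / lam))
      by (auto_derive; [exact I | field; lra]).
    assert (H1 := is_derive_comp g _ y _ _ (g_is_derive 0 _ Hz) Hlin).
    assert (H2 := is_derive_comp g _ y _ _ (g_is_derive 0 _ (g_range _ Hz)) H1).
    assert (H3 := is_derive_scal _ y (- lam) _ H2).
    replace (Derive g (g (- y / lam)) * Derive g (- y / lam))
      with (- lam * (- / lam * Derive g (- y / lam) * Derive g (g (- y / lam))))
      by (field; lra).
    exact H3. }
  apply (derivable_pt_lim_unique_right g (fun t => - lam * g (g (- t / lam))) y (1 - y));
    [exact (g_derivable_pt_lim 0 y ltac:(lra)) | apply is_derive_Reals, Hk | lra |].
  intros t Ht. apply g_renorm. lra.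
Qed.

Lemma g_g_inv_lam : g (g (/ lam)) = / lam.
Proof.
  pose proof lam_gt_1 as Hlam. assert (H := g_renorm (-1) ltac:(lra)).
  rewrite g_m1 in H. replace (- -1 / lam) with (/ lam) in H by (field; lra).
  apply (Rmult_eq_reg_l lam); [|lra]. rewrite Rinv_r; lra.
Qed.

Lemma pos_of_Derive_g_neg x : -1 <= x <= 1 -> Derive g x < 0 -> 0 < x.
Proof.
  intros Hx Hneg. destruct (Rtotal_order x 0) as [Hlt|[->|Hgt]]; [| |exact Hgt].
  - pose proof (Derive_g_pos_left x ltac:(lra)). lra.
  - destruct critical_point_at_0 as (_ & Hd0 & _). lra.
Qed.

Lemma neg_mult_fixed_point_ge_inv_lam q :
  -1 <= q <= 1 -> g q = q -> Derive g q < 0 -> / lam <= q.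
Proof.
  intros Hq Hfix Hneg. pose proof lam_gt_1 as Hlam. pose proof (pos_of_Derive_g_neg q Hq Hneg).
  destruct (Rlt_or_le q (/ lam)) as [Hlt|Hge]; [exfalso | exact Hge].
  set (x := - lam * q).
  assert (Hxq : - x / lam = q) by (unfold x; field; lra).
  assert (Hx : -1 < x < 0).
  { unfold x. split; [|nra].
    apply (Rmult_lt_compat_l lam) in Hlt; [|lra]. rewrite Rinv_r in Hlt; lra. }
  assert (Hgx : g x = x) by (rewrite g_renorm, Hxq, Hfix, Hfix by lra; reflexivity).
  assert (Hdx : Derive g x = Derive g q ^ 2)
    by (rewrite Derive_g_renorm, Hxq, Hfix by lra; ring).
  assert (x = -1) by (apply pos_mult_fixed_point_eq_m1; [lra | exact Hgx | rewrite Hdx; nra]).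
  lra.
Qed.

Let gg' x := Derive g (g x) * Derive g x.
Let gg'' x := Derive_n g 2 (g x) * Derive g x ^ 2 + Derive g (g x) * Derive_n g 2 x.
Let gg''' x := Derive_n g 3 (g x) * Derive g x ^ 3
  + 3 * Derive_n g 2 (g x) * Derive g x * Derive_n g 2 x + Derive g (g x) * Derive_n g 3 x.

Lemma is_derive_gg x : -1 <= x <= 1 -> is_derive (fun t => g (g t)) x (gg' x).
Proof.
  intros Hx.
  replace (gg' x) with (scal (Derive g x) (Derive g (g x))) by (unfold gg'; apply Rmult_comm).
  exact (is_derive_comp g g x _ _ (g_is_derive 0 _ (g_range x Hx)) (g_is_derive 0 x Hx)).
Qed.

Lemma is_derive_gg' x : -1 <= x <= 1 -> is_derive gg' x (gg'' x).
Proof.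
  intros Hx.
  replace (gg'' x) with (Derive_n g 2 (g x) * Derive g x * Derive g x
                         + Derive g (g x) * Derive_n g 2 x) by (unfold gg''; ring).
  apply (is_derive_comp_mult (Derive g) g (Derive g));
    [exact (g_is_derive 1 _ (g_range x Hx)) | exact (g_is_derive 0 x Hx)
    | exact (g_is_derive 1 x Hx)].
Qed.

Lemma is_derive_gg'' x : -1 <= x <= 1 -> is_derive gg'' x (gg''' x).
Proof.
  intros Hx.
  assert (Hsq : is_derive (fun t => Derive g t ^ 2) x (2 * Derive g x * Derive_n g 2 x)).
  { replace (2 * Derive g x * Derive_n g 2 x) with (INR 2 * Derive_n g 2 x * Derive g x ^ 1)
      by (simpl; ring).
    apply is_derive_pow, (g_is_derive 1 x Hx). }
  replace (gg''' x) with
    ((Derive_n g 3 (g x) * Derive g x * Derive g x ^ 2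
      + Derive_n g 2 (g x) * (2 * Derive g x * Derive_n g 2 x))
     + (Derive_n g 2 (g x) * Derive g x * Derive_n g 2 x + Derive g (g x) * Derive_n g 3 x))
    by (unfold gg'''; ring).
  apply (is_derive_plus (fun t => Derive_n g 2 (g t) * Derive g t ^ 2)
                        (fun t => Derive g (g t) * Derive_n g 2 t)).
  - apply (is_derive_comp_mult (Derive_n g 2) g (fun t => Derive g t ^ 2));
      [exact (g_is_derive 2 _ (g_range x Hx)) | exact (g_is_derive 0 x Hx) | exact Hsq].
  - apply (is_derive_comp_mult (Derive g) g (Derive_n g 2));
      [exact (g_is_derive 1 _ (g_range x Hx)) | exact (g_is_derive 0 x Hx)
      | exact (g_is_derive 2 x Hx)].
Qed.

Lemma schwarzian_gg_neg x :
  -1 <= x <= 1 -> x <> 0 -> g x <> 0 -> schwarzian_jet (gg' x) (gg'' x) (gg''' x) < 0.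
Proof.
  intros Hx Hx0 Hgx0. destruct critical_point_at_0 as (_ & _ & _ & _ & Hschw).
  assert (Hgx := g_range x Hx).
  unfold gg', gg'', gg'''. rewrite schwarzian_jet_comp by (apply Derive_g_neq0; assumption).
  specialize (Hschw (g x) Hgx Hgx0) as Hs1. specialize (Hschw x Hx Hx0) as Hs2.
  unfold schwarzian in Hs1, Hs2. unfold schwarzian_jet.
  assert (0 < Derive g x ^ 2) by (apply pow2_gt_0, Derive_g_neq0; assumption).
  nra.
Qed.

Lemma gg'_no_interior_min a b m :
  0 < a -> b <= 1 -> a < m < b -> 0 < g m -> ~ (forall x, a <= x <= b -> gg' m <= gg' x).
Proof.
  intros Ha Hb Hm Hgm Hmin.
  assert (Hgm1 := g_range m ltac:(lra)).
  assert (Hpos : 0 < gg' m).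
  { unfold gg'. pose proof (Derive_g_neg_right m ltac:(lra)).
    pose proof (Derive_g_neg_right (g m) ltac:(lra)). nra. }
  assert (Dgg : forall x, a <= x <= b -> derivable_pt_lim gg' x (gg'' x))
    by (intros x Hx; apply is_derive_Reals, is_derive_gg'; lra).
  assert (Dgg' := proj1 (is_derive_Reals _ _ _) (is_derive_gg'' m ltac:(lra))).
  pose proof (schwarzian_jet_nonneg_at_min gg' gg'' gg''' a b m Dgg Dgg' Hm Hmin Hpos).
  pose proof (schwarzian_gg_neg m ltac:(lra) ltac:(lra) ltac:(lra)).
  lra.
Qed.

Lemma neg_mult_fixed_point_le_inv_lam q :
  -1 <= q <= 1 -> g q = q -> Derive g q < 0 -> q <= / lam.
Proof.
  intros Hq Hfix Hneg. pose proof lam_gt_1 as Hlam. pose proof (pos_of_Derive_g_neg q Hq Hneg).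
  set (a := / lam).
  assert (Ha : 0 < a) by (apply Rinv_0_lt_compat; lra).
  destruct (Rle_or_lt q a) as [Hle|Hgt]; [exact Hle | exfalso].
  set (b := g a).
  assert (Hgb : g b = a) by apply g_g_inv_lam.
  assert (Hqb : q < b) by (rewrite <- Hfix at 1; apply g_strict_decr; lra).
  assert (Hb : b <= 1) by (apply (g_range a); lra).
  assert (Hgg_a : gg' a = Derive g (-1)).
  { unfold gg'. rewrite (Derive_g_renorm (-1)) by lra. unfold a.
    replace (- -1 / lam) with (/ lam) by (field; lra). reflexivity. }
  assert (Hgg_b : gg' b = Derive g (-1))
    by (rewrite <- Hgg_a; unfold gg'; rewrite Hgb; fold b; ring).
  destruct (MVT_cor2 (fun x => g (g x)) gg' a q) as [u [Hmvt Hu]]; [lra | |].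
  { intros c Hc. apply is_derive_Reals, is_derive_gg. lra. }
  fold b in Hmvt. rewrite Hfix, Hfix, Hgb in Hmvt.
  assert (Hgg_u : gg' u = 1) by (apply (Rmult_eq_reg_r (q - a)); lra).
  pose proof Derive_g_m1_ge_1.
  destruct (continuity_ab_min_interior gg' a b u) as [m [Hm Hmin]]; [| lra | lra | lra |].
  { intros x Hx. apply derivable_continuous_pt. exists (gg'' x).
    apply is_derive_Reals, is_derive_gg'. lra. }
  assert (a <= g m) by (rewrite <- Hgb at 1; apply g_decr; lra).
  apply (gg'_no_interior_min a b m); [lra | lra | exact Hm | lra | exact Hmin].
Qed.

End FeigenbaumPair.

Theorem mainTheorem6 (lam : R) (g : R -> R) (q0 : R) :
  feigenbaum_pair lam g ->
  -1 <= q0 <= 1 -> g q0 = q0 -> Derive g q0 < 0 ->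
  Derive g (-1) = (Derive g q0) ^ 2.
Proof.
  intros Hfp Hq0 Hfix Hneg. pose proof (lam_gt_1 lam g Hfp).
  assert (Hq0_inv : q0 = / lam).
  { apply Rle_antisym.
    - exact (neg_mult_fixed_point_le_inv_lam lam g Hfp q0 Hq0 Hfix Hneg).
    - exact (neg_mult_fixed_point_ge_inv_lam lam g Hfp q0 Hq0 Hfix Hneg). }
  rewrite (Derive_g_renorm lam g Hfp (-1)) by lra.
  replace (- -1 / lam) with q0 by (rewrite Hq0_inv; field; lra).
  rewrite Hfix. ring.
Qed.
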